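(* Fix integers $0\le k\le T$. Let $(\nu^k_l)_{k\le l\le T-1}$ be nonnegative numbers, let $n^k=(n^k_l)_{k\le l\le T}$ satisfy $n^k_k=0$ with independent Poisson increments $n^k_{l+1}-n^k_l$ of parameters $\nu^k_l$, independent of $\mathfrak{F}_k$, let $i^k_k\in\{-1,1\}$ be $\mathfrak{F}_k$-measurable, and let $i^k_l=-\mathbf{1}_{i^k_k=-1}+\mathbf{1}_{i^k_k=1}(\mathbf{1}_{n^k_l=0}-\mathbf{1}_{n^k_l\ge1})$ for $k\le l\le T$. Define $$q_k=\sup_{\theta}\mathbb{E}_k\Big[\sum_{\ell=k+1}^{T}\big(\mathbf{1}_{i^k_\ell=-1}-\mathbf{1}_{i^k_\ell=1}\big)\mathbf{1}_{\ell\le\theta}\Big],$$ the supremum being over stopping times $\theta$ with values in $\{k,\dots,T\}$ with respect to the filtration generated by $\mathfrak{F}_k$ and $(i^k_l)_{k\le l\le T}$. Then $q_k=q^k(k,i^k_k)$, where $q^k:\{k,\dots,T\}\times\{1,-1\}\to\mathbb{R}$ is given by $q^k(T,\pm1)=0$ and, for $k\le l<T$, $$q^k(l,-1)=T-l,$$ $$q^k(l,1)=\max\Big(0,\;e^{-\nu^k_l}\big(-1+q^k(l+1,1)\big)+\big(1-e^{-\nu^k_l}\big)\big(1+q^k(l+1,-1)\big)\Big).$$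
   Context: $\mathfrak{F}=(\mathfrak{F}_k)_{0\le k\le T}$ is a filtration on the underlying probability space and $\mathbb{E}_k$ is conditional expectation given $\mathfrak{F}_k$. $q_k$ is the value of the stylized callable range accrual (receiving $+1$ at each date $\ell$ with $i^k_\ell=-1$, paying $1$ at each date with $i^k_\ell=1$, callable at zero value) in the trader's model set up at time $k$. *)

From HB Require Import structures.
From mathcomp Require Import all_boot all_order all_algebra.
From mathcomp Require Import all_classical all_reals all_analysis.
Set Implicit Arguments. Unset Strict Implicit. Unset Printing Implicit Defensive.
Import Order.TTheory GRing.Theory Num.Theory.
Local Open Scope classical_set_scope.
Local Open Scope ring_scope.

Section Defs.
Context {R : realType} {d : measure_display} {Omega : measurableType d}.

(* Poisson probability mass function with parameter nu >= 0
   (nu^m / m! * exp(-nu)); for nu = 0 it is the Dirac mass at 0.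
   (The library's poisson_pmf is 1 everywhere at rate 0, hence not used.) *)
Definition pois (nu : R) (m : nat) : R := nu ^+ m / m`!%:R * expR (- nu).

Definition measurable_wrt (G : set (set Omega)) (f : Omega -> R) : Prop :=
  forall B : set R, measurable B -> G (f @^-1` B).

Definition sub_sigma (G : set (set Omega)) : Prop :=
  sigma_algebra setT G /\ (forall A, G A -> measurable A).

Definition is_cond_exp (P : probability Omega R) (G : set (set Omega))
  (X Y : Omega -> R) : Prop :=
  measurable_wrt G Y /\ P.-integrable setT (EFin \o Y) /\
  forall A, G A -> (\int[P]_(w in A) (Y w)%:E = \int[P]_(w in A) (X w)%:E)%E.

Definition regime (ik : Omega -> R) (n : nat -> Omega -> nat) (l : nat)
  (w : Omega) : R :=
  - (ik w == -1)%:R + (ik w == 1)%:R * ((n l w == 0)%N%:R - (1 <= n l w)%N%:R).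

Definition gen_filtration (Fk : set (set Omega)) (i : nat -> Omega -> R)
  (k l : nat) : set (set Omega) :=
  <<s Fk `|` [set A | exists m B, (k <= m <= l)%N /\ measurable B /\
                              A = i m @^-1` B] >>.

Definition stopping_time (G : nat -> set (set Omega)) (k Tm : nat)
  (theta : Omega -> nat) : Prop :=
  (forall w, (k <= theta w <= Tm)%N) /\
  (forall l, (k <= l <= Tm)%N -> G l [set w | theta w = l]).

Definition payoff (i : nat -> Omega -> R) (k Tm : nat) (theta : Omega -> nat)
  (w : Omega) : R :=
  \sum_(k.+1 <= l < Tm.+1)
     (((i l w == -1)%:R - (i l w == 1)%:R) * (l <= theta w)%N%:R).

End Defs.

Section qfun.
Context {R : realType}.

Definition qminus (Tm l : nat) : R := (Tm - l)%N%:R.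

(* qplus_aux m = q^k(Tm - m, 1) *)
Fixpoint qplus_aux (nu : nat -> R) (Tm m : nat) : R :=
  match m with
  | 0 => 0
  | m'.+1 =>
      let l := (Tm - m'.+1)%N in
      Num.max 0 (expR (- nu l) * (-1 + qplus_aux nu Tm m')
                 + (1 - expR (- nu l)) * (1 + qminus Tm l.+1))
  end.

Definition qplus (nu : nat -> R) (Tm l : nat) : R := qplus_aux nu Tm (Tm - l).

Definition qfun (nu : nat -> R) (Tm l : nat) (s : R) : R :=
  if s == 1 then qplus nu Tm l else qminus Tm l.

End qfun.

From HB Require Import structures.
From mathcomp Require Import all_boot all_order all_algebra.
From mathcomp Require Import all_classical all_reals all_analysis.
From mathcomp Require Import ring lra measurable_realfun.
Import Order.TTheory GRing.Theory Num.Theory.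
Local Open Scope classical_set_scope.
Local Open Scope ring_scope.
Set Implicit Arguments. Unset Strict Implicit. Unset Printing Implicit Defensive.

(* On {i^k_k = 1} the regime almost surely stays at 1 exactly
   until the first jump of n^k; along such paths every event of the filtration generated by
   F_k and the regime coincides with an F_k-event.  With the independence of
   the Poisson increments from F_k this gives, for S in that filtration at time
   l, P(S, i_{l+1} = 1) = exp(-nu_l) P(S, i_l = 1).  Hence the value
   V_l(S) = q(l,1) P(S, i_l = 1) + q(l,-1) P(S, i_l = -1) satisfies
   E[reward of step l+1; S] + V_{l+1}(S) <= V_l(S), with equality when
   q(l,1) > 0 or P(S, i_l = 1) = 0.  Telescoping over the sets A /\ {theta > l}
   shows E[payoff of theta; A] <= E[q^k(k, i^k_k); A] for every F_k-set A and
   every stopping time theta, with equality for the rule that calls at the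
   first l with q^k(l,1) = 0 if the regime is still 1 then.  Integrating over
   A = {q^k(k, i^k_k) < Y} turns the inequality into an almost sure one. *)

Section sigma_algebra_closure.
Variables (T : Type) (G : set (set T)).
Hypothesis saG : sigma_algebra setT G.

Lemma sa_set0 : G set0. Proof. by case: saG. Qed.

Lemma sa_setC A : G A -> G (~` A).
Proof. by case: saG => _ h _ /h; rewrite setTD. Qed.

Lemma sa_setT : G setT.
Proof. by rewrite -setC0; apply: sa_setC; exact: sa_set0. Qed.

Lemma sa_bigcup (A : (set T)^nat) : (forall j, G (A j)) -> G (\bigcup_j A j).
Proof. by case: saG => _ _; apply. Qed.

Lemma sa_setU A B : G A -> G B -> G (A `|` B).
Proof.
move=> GA GB; rewrite -bigcup2E; apply: sa_bigcup => -[|[|j]] //=.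
exact: sa_set0.
Qed.

Lemma sa_setI A B : G A -> G B -> G (A `&` B).
Proof.
by move=> GA GB; rewrite -[A `&` B]setCK setCI; apply/sa_setC/sa_setU; apply: sa_setC.
Qed.

Lemma sa_cst (q : Prop) : G [set _ | q].
Proof.
case: (pselect q) => hq.
  by rewrite (_ : [set _ | q] = setT); [exact: sa_setT|apply/seteqP; split].
by rewrite (_ : [set _ | q] = set0); [exact: sa_set0|apply/seteqP; split].
Qed.

End sigma_algebra_closure.

Lemma sa_preimage_two_valued (T : Type) (G : set (set T)) (R : Type)
    (f : T -> R) (E : set T) (a b : R) :
  sigma_algebra setT G -> G E ->
  (forall w, E w -> f w = a) -> (forall w, ~ E w -> f w = b) ->
  forall B, G (f @^-1` B).
Proof.
move=> saG GE fa fb B.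
have -> : f @^-1` B = (E `&` [set _ | B a]) `|` (~` E `&` [set _ | B b]).
  apply/seteqP; split => w /=.
    by have [Ew|nEw] := pselect (E w); [rewrite fa//; left|rewrite fb//; right].
  by case=> -[Ew]; [rewrite fa|rewrite fb].
by apply: sa_setU => //; apply: sa_setI => //; [exact: sa_cst|exact: sa_setC|exact: sa_cst].
Qed.

Lemma measurable_natrel d (T : measurableType d) (f g : T -> nat)
    (r : nat -> nat -> bool) :
  measurable_fun setT f -> measurable_fun setT g ->
  measurable [set w | r (f w) (g w)].
Proof.
move=> mf mg.
have -> : [set w | r (f w) (g w)] =
    \bigcup_y (f @^-1` [set y] `&` g @^-1` [set z | r y z]).
  apply/seteqP; split => [w /= h|w [y _ [/= -> //]]].
  by exists (f w).
apply: bigcupT_measurable => y; apply: measurableI.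
- by rewrite -[_ @^-1` _]setTI; apply: mf.
- by rewrite -[_ @^-1` _]setTI; apply: mg.
Qed.

Lemma measurable_wrt_measurable_fun (R : realType) d (Omega : measurableType d)
    (G : set (set Omega)) (f : Omega -> R) :
  G `<=` measurable -> measurable_wrt G f -> measurable_fun setT f.
Proof. by move=> Gm Gf _ B mB; rewrite setTI; apply/Gm/Gf. Qed.

Lemma ae_le_of_integral_le d (T : measurableType d) (R : realType)
    (mu : {measure set T -> \bar R}) (f g : T -> R) :
  measurable_fun setT f -> measurable_fun setT g ->
  mu.-integrable setT (EFin \o f) -> mu.-integrable setT (EFin \o g) ->
  (\int[mu]_(x in [set x | (g x < f x)%R]) (f x)%:E
     <= \int[mu]_(x in [set x | (g x < f x)%R]) (g x)%:E)%E ->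
  {ae mu, forall x, f x <= g x}.
Proof.
move=> mf mg if_ ig; set D := [set x | g x < f x] => fg.
have mD : measurable D.
  rewrite -[D]setTI -[D]/((fun x => g x < f x) @^-1` [set true]).
  exact: measurable_fun_ltr.
have mfg : measurable_fun D (EFin \o (f \- g)).
  by apply/measurable_EFinP; apply: measurable_funB; apply: (measurable_funS measurableT).
have int0 : (\int[mu]_(x in D) `|(EFin \o (f \- g)%R) x| = 0)%E.
  apply/eqP; rewrite eq_le integral_ge0 // andbT.
  rewrite (eq_integral (fun x => ((f x)%:E - (g x)%:E)%E)); last first.
    by move=> x /[!inE] Dx; rewrite gee0_abs /= ?EFinB // lee_fin subr_ge0 ltW.
  by rewrite integralB_EFin ?sube_le0 //; exact: (integrableS measurableT).
have [N [mN N0 DN]] := (ae_eq_integral_abs mu mD mfg).1 int0.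
exists N; split => // x /= nfg; apply: DN => /= fg0.
have Dx : D x by rewrite /D /= ltNge; apply/negP.
have /eqP := fg0 Dx; rewrite eqe subr_eq0 => /eqP fgx.
by move: Dx; rewrite /D /= fgx ltxx.
Qed.

Section real_probability.
Variables (R : realType) (d : measure_display) (Omega : measurableType d).
Variable P : probability Omega R.

Definition rprob (A : set Omega) : R := fine (P A).

Lemma rprobE A : measurable A -> P A = (rprob A)%:E.
Proof. by move=> mA; rewrite /rprob fineK // fin_num_measure. Qed.

Lemma rprob_ge0 A : 0 <= rprob A.
Proof. exact: fine_ge0. Qed.

Lemma le_rprob A B : measurable A -> measurable B -> A `<=` B -> rprob A <= rprob B.
Proof.
move=> mA mB AB; rewrite -lee_fin -(rprobE mA) -(rprobE mB).
by apply: le_measure => //; rewrite inE.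
Qed.

Lemma rprob_setID A B : measurable A -> measurable B ->
  rprob A = rprob (A `&` B) + rprob (A `\` B).
Proof.
move=> mA mB; apply/EFin_inj; rewrite EFinD -(rprobE mA).
rewrite -(rprobE (measurableI _ _ mA mB)) -(rprobE (measurableD mA mB)) addeC.
exact: measureDI.
Qed.

Lemma integrable_indic_on D X : measurable D -> measurable X ->
  P.-integrable D (fun w => (\1_X w)%:E).
Proof.
move=> mD mX; apply: (integrableS measurableT mD (@subsetT _ _)).
exact: integrable_indic.
Qed.

Lemma integrable_indic_comb D X (a b : R) : measurable D -> measurable X ->
  P.-integrable D (fun w => (a * \1_X w + b * \1_(~` X) w)%:E).
Proof.
move=> mD mX; under eq_fun do rewrite EFinD !EFinM.
by apply: integrableD => //; apply: integrableZl => //;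
  apply: integrable_indic_on => //; exact: measurableC.
Qed.

Lemma integral_indic_comb D X (a b : R) : measurable D -> measurable X ->
  (\int[P]_(w in D) (a * \1_X w + b * \1_(~` X) w)%:E
   = (a * rprob (X `&` D) + b * rprob (~` X `&` D))%:E)%E.
Proof.
move=> mD mX; have mC := measurableC mX.
under eq_integral do rewrite EFinD !EFinM.
rewrite integralD //; try by apply: integrableZl => //; exact: integrable_indic_on.
rewrite !integralZl ?integral_indic //; try exact: integrable_indic_on.
by rewrite EFinD !EFinM -(rprobE (measurableI _ _ mX mD)) -(rprobE (measurableI _ _ mC mD)).
Qed.

End real_probability.

(** * Poisson increments *)

Section poisson.
Variable R : realType.

Lemma pois_ge0 (nu : R) m : 0 <= nu -> 0 <= pois nu m.
Proof. by move=> nu0; rewrite /pois mulr_ge0 ?expR_ge0 // divr_ge0 // exprn_ge0. Qed.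

Lemma pois0 (nu : R) : pois nu 0 = expR (- nu).
Proof. by rewrite /pois expr0 fact0 div1r invr1 mul1r. Qed.

Lemma nneseries_pois (nu : R) : 0 <= nu ->
  (\sum_(0 <= m <oo) (pois nu m)%:E = 1)%E.
Proof.
move=> nu0.
rewrite [RHS](_ : _ = (expR (- nu))%:E * (expR nu)%:E)%E; last first.
  by rewrite -EFinM expRN mulVf ?gt_eqF ?expR_gt0.
under eq_eseriesr do rewrite /pois EFinM muleC.
rewrite nneseriesZl/=; last by move=> j _; rewrite lee_fin divr_ge0// exprn_ge0.
congr *%E; rewrite expRE -EFin_lim; last first.
  rewrite /pseries/=; under eq_fun do rewrite mulrC.
  exact: is_cvg_series_exp_coeff.
apply/congr_lim/funext => j/=; rewrite /pseries/= /series/= -sumEFin//.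
by under eq_bigr do rewrite mulrC.
Qed.

End poisson.

Section poisson_increments.
Variables (R : realType) (d : measure_display) (Omega : measurableType d).
Variables (P : probability Omega R) (H : set (set Omega)).
Variables (n : nat -> Omega -> nat) (k Tm : nat) (nu : nat -> R).
Hypothesis subH : sub_sigma H.
Hypothesis n_measurable : forall l, measurable_fun setT (n l).
Hypothesis nu_ge0 : forall l, (k <= l < Tm)%N -> 0 <= nu l.
Hypothesis increments_indep : forall (A : set Omega) (m : nat -> nat), H A ->
  P (A `&` [set w | forall l, (k <= l < Tm)%N -> n l.+1 w = (n l w + m l)%N])
  = (P A * (\prod_(k <= l < Tm) pois (nu l) (m l))%:E)%E.

(* Asking the unprescribed increments to be nonnegative (rather than arbitrary)
   makes [incr_event C m] the disjoint union of its refinements at a free index,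
   with no exceptional null set. *)
Definition incr_event (C : pred nat) (m : nat -> nat) : set Omega :=
  [set w | forall l, (k <= l < Tm)%N ->
     if C l then n l.+1 w = (n l w + m l)%N else (n l w <= n l.+1 w)%N].

Lemma measurable_incr_event C m : measurable (incr_event C m).
Proof.
pose r l (a b : nat) := ((k <= l < Tm) ==> if C l then b == a + m l else a <= b)%N.
have -> : incr_event C m = \bigcap_l [set w | r l (n l w) (n l.+1 w)].
  apply/seteqP; split => w /= h l.
    by move=> _; apply/implyP => /h; case: (C l) => // ->.
  by move=> hl; have /implyP/(_ hl) := h l I; case: (C l) => // /eqP.
by apply: bigcapT_measurable => l; exact: measurable_natrel.
Qed.

Section refine.
Variables (C : pred nat) (m : nat -> nat) (l0 : nat).
Hypotheses (l0_range : (k <= l0 < Tm)%N) (l0_free : ~~ C l0).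

Let C' l := C l || (l == l0).
Let m' x l := if l == l0 then x else m l.

Lemma incr_event_refine :
  incr_event C m = \bigcup_x incr_event C' (m' x).
Proof.
apply/seteqP; split => w.
  move=> hw; exists (n l0.+1 w - n l0 w)%N => // l hl; rewrite /C' /m'.
  case: eqP => [->|_]; last by rewrite orbF; exact: hw.
  by rewrite orbT subnKC //; move: (hw l0 l0_range); rewrite (negbTE l0_free).
move=> [x _ hw] l hl; move: (hw l hl); rewrite /C' /m'.
case: eqP => [->|_]; last by rewrite orbF.
by rewrite (negbTE l0_free) orbT => ->; exact: leq_addr.
Qed.

Lemma trivIset_incr_event_refine : trivIset setT (fun x => incr_event C' (m' x)).
Proof.
move=> x y _ _ [w [hx hy]]; move: (hx l0 l0_range) (hy l0 l0_range).
by rewrite /C' /m' eqxx orbT => -> /eqP; rewrite eqn_add2l => /eqP.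
Qed.

Lemma prod_pois_refine x :
  \prod_(k <= l < Tm | C' l) pois (nu l) (m' x l)
  = pois (nu l0) x * \prod_(k <= l < Tm | C l) pois (nu l) (m l).
Proof.
have l0_in : l0 \in index_iota k Tm by rewrite mem_index_iota.
rewrite big_mkcond (bigD1_seq l0) ?iota_uniq //= /C' /m' eqxx orbT.
congr (_ * _); rewrite [RHS]big_mkcond (bigD1_seq l0) ?iota_uniq //=.
rewrite (negbTE l0_free) mul1r; apply: eq_bigr => l /negbTE h.
by rewrite h orbF.
Qed.

Lemma measure_incr_event_refine A : measurable A ->
  (forall x, P (A `&` incr_event C' (m' x))
     = (P A * (\prod_(k <= l < Tm | C' l) pois (nu l) (m' x l))%:E)%E) ->
  P (A `&` incr_event C m)
  = (P A * (\prod_(k <= l < Tm | C l) pois (nu l) (m l))%:E)%E.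
Proof.
move=> mA PC'; have mE x : measurable (A `&` incr_event C' (m' x)).
  exact: measurableI mA (measurable_incr_event _ _).
rewrite incr_event_refine setI_bigcupr measure_semi_bigcup //; first last.
- exact: bigcupT_measurable.
- exact/trivIset_setIl/trivIset_incr_event_refine.
have PA : P A = (fine (P A))%:E by rewrite fineK // fin_num_measure.
pose Pm := \prod_(k <= l < Tm | C l) pois (nu l) (m l).
transitivity (\sum_(0 <= x <oo) ((fine (P A) * Pm)%:E * (pois (nu l0) x)%:E))%E.
  apply: eq_eseriesr => x _; apply: eq_trans (PC' x) _.
  by rewrite prod_pois_refine PA -!EFinM mulrCA mulrC.
rewrite nneseriesZl; last by move=> x _; rewrite lee_fin pois_ge0 // nu_ge0.
by rewrite nneseries_pois ?nu_ge0 // mule1 PA -EFinM.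
Qed.

End refine.

Lemma measure_incr_event A C m : H A ->
  P (A `&` incr_event C m)
  = (P A * (\prod_(k <= l < Tm | C l) pois (nu l) (m l))%:E)%E.
Proof.
have [_ Hmeas] := subH; move=> HA; have mA := Hmeas _ HA.
suff : forall (s : seq nat) C m, (forall l, (k <= l < Tm)%N -> ~~ C l -> l \in s) ->
    P (A `&` incr_event C m)
    = (P A * (\prod_(k <= l < Tm | C l) pois (nu l) (m l))%:E)%E.
  by move/(_ (index_iota k Tm)); apply=> l hl _; rewrite mem_index_iota.
elim=> [|l0 s IH] {}C {}m Cs.
  have CT l : (k <= l < Tm)%N -> C l by move=> hl; apply: contraT => /(Cs l hl).
  have -> : incr_event C m =
      [set w | forall l, (k <= l < Tm)%N -> n l.+1 w = (n l w + m l)%N].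
    by apply/seteqP; split => w h l hl; move: (h l hl); rewrite CT.
  rewrite increments_indep // big_nat_cond [in RHS]big_nat_cond.
  congr (_ * _)%E; congr EFin; apply: eq_bigl => l.
  by rewrite andbT; case: (boolP (_ && _)) => /= hl; rewrite ?CT.
have [/andP[l0r l0f]|l0C] := boolP ((k <= l0 < Tm)%N && ~~ C l0); last first.
  apply: IH => l hl Cl; move: (Cs l hl Cl); rewrite inE => /orP[/eqP el|//].
  by move: l0C; rewrite -el hl Cl.
apply: (measure_incr_event_refine l0r l0f mA) => x; apply: IH => l hl.
rewrite negb_or => /andP[Cl /negbTE ll0].
by move: (Cs l hl Cl); rewrite inE ll0.
Qed.

Definition monotone_event : set Omega := incr_event xpred0 (fun=> 0%N).

Lemma measure_setI_monotone X : measurable X ->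
  P (X `&` monotone_event) = P X.
Proof.
move=> mX; have mM : measurable monotone_event by exact: measurable_incr_event.
have PM : P monotone_event = 1%E.
  rewrite -[monotone_event]setTI measure_incr_event ?probability_setT ?mul1e //.
  - by rewrite big_pred0.
  - by apply: sa_setT; case: subH.
have PnM : P (X `\` monotone_event) = 0%E.
  have PC : P (~` monotone_event) = 0%E by rewrite probability_setC // PM subee.
  by apply: (subset_measure0 (measurableD mX mM) (measurableC mM) _ PC) => w [].
apply/esym; apply: eq_trans (measureDI P mX mM) _.
by rewrite [X in (X + _)%E](_ : _ = 0%E); [exact: add0e|exact: PnM].
Qed.

Lemma measure_zero_increments A l : H A -> (l <= Tm)%N ->
  P (A `&` incr_event (fun j => j < l)%N (fun=> 0%N))
  = (P A * (\prod_(k <= j < l) expR (- nu j))%:E)%E.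
Proof.
move=> HA lTm; rewrite measure_incr_event // (big_nat_widen _ _ _ _ _ lTm).
by congr (_ * (_ : R)%:E)%E; apply: eq_bigr => j _; rewrite pois0.
Qed.

End poisson_increments.

(** * Filtrations and stopping times *)

Section gen_filtration.
Variables (R : realType) (d : measure_display) (Omega : measurableType d).
Variables (Fk : set (set Omega)) (i : nat -> Omega -> R) (k : nat).
Local Notation G := (gen_filtration Fk i k).

Lemma sigma_algebra_gen_filtration l : sigma_algebra setT (G l).
Proof. exact: smallest_sigma_algebra. Qed.

Lemma sub_gen_filtration l : Fk `<=` G l.
Proof. by move=> A FA; apply: sub_gen_smallest; left. Qed.

Lemma gen_filtration_preimage l m B : (k <= m <= l)%N -> measurable B ->
  G l (i m @^-1` B).
Proof. by move=> ml mB; apply: sub_gen_smallest; right; exists m, B. Qed.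

Lemma gen_filtration_mono : {homo G : j l / (j <= l)%N >-> j `<=` l}.
Proof.
move=> j l jl; apply: smallest_sub; first exact: sigma_algebra_gen_filtration.
move=> B [/sub_gen_filtration //|[m [C [/andP[km mj] [mC ->]]]]].
by apply: gen_filtration_preimage; rewrite // km (leq_trans mj).
Qed.

Lemma gen_filtration_measurable l :
  Fk `<=` measurable -> (forall m B, measurable B -> measurable (i m @^-1` B)) ->
  G l `<=` measurable.
Proof.
move=> Fkm im; apply: smallest_sub; first exact: sigma_algebra_measurable.
by move=> B [/Fkm //|[m [C [_ [mC ->]]]]]; exact: im.
Qed.

Lemma gen_filtration_trace l S : sigma_algebra setT Fk -> G l S ->
  exists2 A, Fk A & S `&` [set w | forall m, (k <= m <= l)%N -> i m w = 1]
                  = A `&` [set w | forall m, (k <= m <= l)%N -> i m w = 1].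
Proof.
move=> saF; set W := [set w | _]; move: S; apply: smallest_sub.
- split.
  + by exists set0; [exact: sa_set0|rewrite !set0I].
  + move=> B [A FA e]; exists (~` A); first exact: sa_setC.
    apply/seteqP; split => w [Bw Ww]; split => //.
      by move=> Aw; case: Bw => _; apply; have : (A `&` W) w by []; rewrite -e => -[].
    by split => // Bw'; apply: Bw; have : (B `&` W) w by []; rewrite e => -[].
  + move=> B hB.
    have /choice[f hf] : forall j, exists A, Fk A /\ B j `&` W = A `&` W.
      by move=> j; have [A FA e] := hB j; exists A.
    exists (\bigcup_j f j); first by apply: sa_bigcup => // j; case: (hf j).
    by rewrite !setI_bigcupl; apply: eq_bigcupr => j _; case: (hf j).
- move=> B [FB|[m [C [km [_ ->]]]]]; first by exists B.
  have [C1|nC1] := pselect (C 1).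
    exists setT; first exact: sa_setT.
    by apply/seteqP; split => w [_ Ww]; split => //=; rewrite Ww.
  exists set0; first exact: sa_set0.
  by apply/seteqP; split => w [] // Cw Ww; case: nC1; rewrite -(Ww m km).
Qed.

End gen_filtration.

Section stopping_time.
Variables (d : measure_display) (Omega : measurableType d).
Variables (G : nat -> set (set Omega)) (k Tm : nat).
Hypothesis saG : forall l, sigma_algebra setT (G l).
Hypothesis G_mono : {homo G : j l / (j <= l)%N >-> j `<=` l}.
Hypothesis G_measurable : forall l, G l `<=` measurable.
Variable theta : Omega -> nat.
Hypothesis theta_stop : stopping_time G k Tm theta.

Lemma stopping_time_gt l : (l <= Tm)%N -> G l [set w | (l < theta w)%N].
Proof.
move=> lTm; have [theta_range theta_eq] := theta_stop.
have -> : [set w | (l < theta w)%N] =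
    ~` \bigcup_j (if (k <= j <= l)%N then [set w | theta w = j] else set0).
  apply/seteqP; split => w /=.
    by move=> lt [j _]; case: ifP => // /andP[_ jl] ej; move: lt; rewrite ej ltnNge jl.
  move=> nle; rewrite ltnNge; apply/negP => le; apply: nle; exists (theta w) => //.
  by have /andP[-> _] := theta_range w; rewrite le.
apply: sa_setC => //; apply: sa_bigcup => // j; case: ifP => [/andP[kj jl]|_]; last exact: sa_set0.
by apply: (G_mono jl); apply: theta_eq; rewrite kj (leq_trans jl).
Qed.

Lemma measurable_stopping_time_gt l : measurable [set w | (l < theta w)%N].
Proof.
have [lTm|Tml] := leqP l Tm; first exact/G_measurable/stopping_time_gt.
rewrite (_ : [set w | _] = set0) //; apply/seteqP; split => w //= lt.
by have /andP[_] := theta_stop.1 w; rewrite leqNgt (ltn_trans Tml lt).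
Qed.

End stopping_time.

(** * The regime process and the value function *)

Lemma eqrN1_1 (R : realDomainType) : ((-1 : R) == 1) = false.
Proof. by apply/negbTE/eqP => h; lra. Qed.

Section regime.
Variables (R : realType) (d : measure_display) (Omega : measurableType d).
Variables (ik : Omega -> R) (n : nat -> Omega -> nat).
Hypothesis ik_pm1 : forall w, ik w = 1 \/ ik w = -1.

Lemma regimeE l w :
  regime ik n l w = if (ik w == 1) && (n l w == 0)%N then 1 else -1.
Proof.
rewrite /regime; case: (ik_pm1 w) => ->.
  rewrite eqxx eq_sym eqrN1_1 /= mul1r oppr0 add0r.
  by case: (n l w) => [|m] /=; rewrite ?subr0 ?sub0r.
by rewrite eqxx eqrN1_1 /= mul0r addr0.
Qed.

Lemma regime_eq1 l w : regime ik n l w = 1 <-> ik w = 1 /\ n l w = 0%N.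
Proof.
rewrite regimeE; case: ifPn => [/andP[/eqP-> /eqP->] //|h].
split=> [/eqP|[/eqP i1 /eqP n0]]; last by rewrite i1 n0 in h.
by rewrite eqrN1_1.
Qed.

Lemma regime_pm1 l w : regime ik n l w = 1 \/ regime ik n l w = -1.
Proof. by rewrite regimeE; case: ifP; [left|right]. Qed.

End regime.

Section value_function.
Variables (R : realType) (nu : nat -> R) (Tm : nat).

Definition qcont l : R := expR (- nu l) * (-1 + qplus nu Tm l.+1)
  + (1 - expR (- nu l)) * (1 + qminus Tm l.+1).

Lemma qplusE l : (l < Tm)%N -> qplus nu Tm l = Num.max 0 (qcont l).
Proof. by move=> lT; rewrite /qplus -(subnSK lT) /= subnSK // subKn // ltnW. Qed.

Lemma qplus_Tm : qplus nu Tm Tm = 0.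
Proof. by rewrite /qplus subnn. Qed.

Lemma qminus_Tm : qminus Tm Tm = 0 :> R.
Proof. by rewrite /qminus subnn. Qed.

Lemma qminusS l : (l < Tm)%N -> qminus Tm l = qminus Tm l.+1 + 1 :> R.
Proof. by move=> lT; rewrite /qminus -(subnSK lT) -addn1 natrD. Qed.

Lemma qplus_ge0 l : 0 <= qplus nu Tm l.
Proof.
have [lT|Tl] := ltnP l Tm; first by rewrite qplusE // le_max lexx.
by rewrite /qplus (eqP Tl).
Qed.

Lemma qcont_le l : (l < Tm)%N -> qcont l <= qplus nu Tm l.
Proof. by move=> lT; rewrite qplusE // le_max lexx orbT. Qed.

Lemma qplus_neq0 l : (l < Tm)%N -> qplus nu Tm l != 0 -> qplus nu Tm l = qcont l.
Proof.
by move=> lT; rewrite qplusE //; case: leP => // _; rewrite eqxx.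
Qed.

End value_function.

(** * Optimal calling of the range accrual *)

Section callable_range_accrual.
Variables (R : realType) (d : measure_display) (Omega : measurableType d).
Variables (P : probability Omega R) (F : nat -> set (set Omega)) (k Tm : nat).
Variables (nu : nat -> R) (n : nat -> Omega -> nat) (ik : Omega -> R).
Hypothesis F_sub : forall j, sub_sigma (F j).
Hypothesis kTm : (k <= Tm)%N.
Hypothesis nu_ge0 : forall l, (k <= l < Tm)%N -> 0 <= nu l.
Hypothesis n_measurable : forall l, measurable_fun setT (n l).
Hypothesis n_k : forall w, n k w = 0%N.
Hypothesis increments_indep : forall (A : set Omega) (m : nat -> nat), F k A ->
  P (A `&` [set w | forall l, (k <= l < Tm)%N -> n l.+1 w = (n l w + m l)%N])
  = (P A * (\prod_(k <= l < Tm) pois (nu l) (m l))%:E)%E.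
Hypothesis ik_pm1 : forall w, ik w = 1 \/ ik w = -1.
Hypothesis ik_measurable : measurable_wrt (F k) ik.

Local Notation i := (regime ik n).
Local Notation G := (gen_filtration (F k) i k).
Local Notation monotone := (monotone_event n k Tm).
Local Notation p := (rprob P).

Let saF : sigma_algebra setT (F k). Proof. by case: (F_sub k). Qed.
Let F_measurable : F k `<=` measurable. Proof. by case: (F_sub k). Qed.
Let saG l : sigma_algebra setT (G l) := sigma_algebra_gen_filtration (F k) i k l.
Let G_mono : {homo G : j l / (j <= l)%N >-> j `<=` l} :=
  @gen_filtration_mono R d Omega (F k) i k.

Definition ik1 : set Omega := [set w | ik w = 1].
Definition regime1 l : set Omega := [set w | i l w = 1].

Lemma F_ik1 : F k ik1.
Proof. by have := ik_measurable (measurable_set1 1). Qed.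

Lemma regime1E l : regime1 l = ik1 `&` n l @^-1` [set 0%N].
Proof. by apply/seteqP; split => w /(regime_eq1 n ik_pm1). Qed.

Lemma measurable_regime1 l : measurable (regime1 l).
Proof.
rewrite regime1E; apply: measurableI; first exact/F_measurable/F_ik1.
by rewrite -[_ @^-1` _]setTI; apply: n_measurable.
Qed.

Lemma measurable_regime_preimage l B : measurable (i l @^-1` B).
Proof.
apply: (sa_preimage_two_valued (E := regime1 l) (a := 1) (b := -1)) => //.
- exact: sigma_algebra_measurable.
- exact: measurable_regime1.
- move=> w nw; rewrite (regimeE n ik_pm1); case: ifPn => // /andP[/eqP ik1w /eqP nl0].
  by case: nw; apply/(regime_eq1 n ik_pm1).
Qed.

Lemma G_measurable l : G l `<=` measurable.
Proof.
apply: gen_filtration_measurable => //.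
by move=> m B _; exact: measurable_regime_preimage.
Qed.

Lemma monotone_le w a b : monotone w -> (k <= a <= b)%N -> (b <= Tm)%N ->
  (n a w <= n b w)%N.
Proof.
move=> mw /andP[ka]; elim: b => [|b IH]; first by rewrite leqn0 => /eqP ->.
rewrite leq_eqVlt => /orP[/eqP -> //|ab] bT.
by apply: leq_trans (IH ab (ltnW bT)) _; apply: mw; rewrite (leq_trans ka ab).
Qed.

Definition zero_path l : set Omega :=
  ik1 `&` incr_event n k Tm (fun j => j < l)%N (fun=> 0%N).

Lemma zero_path_n l w : (l <= Tm)%N -> zero_path l w ->
  forall m, (k <= m <= l)%N -> n m w = 0%N.
Proof.
move=> lT [_ zw] m /andP[km]; rewrite -(subnKC km).
elim: (m - k)%N => [|j IH] jl; first by rewrite addn0 n_k.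
have kjl : (k + j < l)%N by rewrite -addnS.
have := zw (k + j); rewrite leq_addr (leq_trans kjl lT) kjl addn0 addnS.
by move=> /(_ isT) ->; exact: IH (ltnW kjl).
Qed.

Lemma zero_path_le l l' : (l <= l')%N -> zero_path l' `<=` zero_path l.
Proof.
move=> ll' w [ik1w zw]; split => // j hj; move: (zw j hj).
have [jl|lj] := ltnP j l; first by rewrite (leq_trans jl ll').
by case: ifP => // _ ->; rewrite addn0.
Qed.

Lemma regime1_monotone l : (k <= l <= Tm)%N -> regime1 l `&` monotone = zero_path l.
Proof.
move=> /andP[kl lT]; apply/seteqP; split => w.
  move=> [/(regime_eq1 n ik_pm1) [ik1w nl0] mw]; split => // j /andP[kj jT].
  case: ifPn => [jl|_]; last by move: (mw j); rewrite kj jT => /(_ isT).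
  have n0 m : (k <= m <= l)%N -> n m w = 0%N.
    move=> /andP[km ml]; apply/eqP; rewrite -leqn0 -nl0.
    by apply: monotone_le => //; rewrite km.
  by rewrite (n0 j) ?(n0 j.+1) // ?kj ?(ltnW jl) // (leq_trans kj (leqnSn j)).
move=> zw; split.
  apply/(regime_eq1 n ik_pm1); split; first by case: zw.
  by apply: (zero_path_n lT zw); rewrite kl leqnn.
move=> j jr; case: zw => _ /(_ j jr); by case: ifP => // _ ->; rewrite addn0.
Qed.

Lemma zero_path_regime1 l : (l <= Tm)%N ->
  zero_path l `<=` [set w | forall m, (k <= m <= l)%N -> i m w = 1].
Proof.
move=> lT w zw m ml; apply/(regime_eq1 n ik_pm1); split; first by case: zw.
exact: (zero_path_n lT zw).
Qed.

Definition survival l := \prod_(k <= j < l) expR (- nu j).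

Lemma measure_zero_path A l : F k A -> (l <= Tm)%N ->
  P (A `&` zero_path l) = (P (A `&` ik1) * (survival l)%:E)%E.
Proof.
move=> FA lT; rewrite setIA.
apply: (measure_zero_increments (F_sub k) n_measurable nu_ge0 increments_indep) => //.
exact: sa_setI FA F_ik1.
Qed.

Lemma measure_regime1 l S : G l S -> (k <= l <= Tm)%N ->
  exists2 A, F k A & forall l', (l <= l' <= Tm)%N ->
    P (S `&` regime1 l') = (P (A `&` ik1) * (survival l')%:E)%E.
Proof.
move=> GS /andP[kl lT]; have [A FA SA] := gen_filtration_trace saF GS.
exists A => // l' /andP[ll' l'T].
have kl'T : (k <= l' <= Tm)%N by rewrite (leq_trans kl ll') l'T.
have mSl' := measurableI _ _ (G_measurable GS) (measurable_regime1 l').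
rewrite -(measure_setI_monotone (F_sub k) n_measurable nu_ge0 increments_indep mSl').
rewrite -setIA (regime1_monotone kl'T).
have sub := subset_trans (zero_path_le ll') (zero_path_regime1 lT).
rewrite -(setIidr sub) setIA SA -setIA (setIidr sub).
exact: measure_zero_path.
Qed.

Lemma rprob_regime1S l S : G l S -> (k <= l < Tm)%N ->
  p (S `&` regime1 l.+1) = expR (- nu l) * p (S `&` regime1 l).
Proof.
move=> GS /andP[kl lT]; have [A FA hA] := measure_regime1 GS (introT andP (conj kl (ltnW lT))).
have mA1 := measurableI _ _ (F_measurable FA) (F_measurable F_ik1).
have pS l' : (l <= l' <= Tm)%N ->
    p (S `&` regime1 l') = p (A `&` ik1) * survival l'.
  by move=> ll'; rewrite /rprob (hA l' ll') (rprobE P mA1) -EFinM.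
have ll : (l <= l <= Tm)%N by rewrite leqnn ltnW.
have ll1 : (l <= l.+1 <= Tm)%N by rewrite leqnSn.
by rewrite (pS _ ll1) (pS _ ll) /survival big_nat_recr //=; ring.
Qed.

Definition value l S :=
  qplus nu Tm l * p (S `&` regime1 l) + qminus Tm l * p (S `\` regime1 l).

Definition reward l S := p (S `\` regime1 l.+1) - p (S `&` regime1 l.+1).

Lemma value_Tm S : value Tm S = 0.
Proof. by rewrite /value qplus_Tm qminus_Tm !mul0r addr0. Qed.

Lemma le_value l S1 S2 : measurable S1 -> measurable S2 -> S1 `<=` S2 ->
  value l S1 <= value l S2.
Proof.
move=> m1 m2 S12; have mR := measurable_regime1 l.
rewrite lerD // ler_wpM2l ?qplus_ge0 ?ler0n //; apply: le_rprob.
- exact: measurableI. - exact: measurableI. - exact: setSI.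
- exact: measurableD. - exact: measurableD. - exact: setSD.
Qed.

Lemma value_step l S : G l S -> (k <= l < Tm)%N ->
  reward l S + value l.+1 S
  = qminus Tm l * p (S `\` regime1 l) + qcont nu Tm l * p (S `&` regime1 l).
Proof.
move=> GS lr; have mS := G_measurable GS; have /andP[_ lT] := lr.
have eS := rprob_setID P mS (measurable_regime1 l).
have eS' := rprob_setID P mS (measurable_regime1 l.+1).
have eD : p (S `\` regime1 l.+1) = p S - p (S `&` regime1 l.+1) by rewrite eS'; ring.
rewrite /reward /value /qcont (qminusS _ lT) eD (rprob_regime1S GS lr) eS; ring.
Qed.

Lemma value_step_le l S : G l S -> (k <= l < Tm)%N ->
  reward l S + value l.+1 S <= value l S.
Proof.
move=> GS lr; have /andP[_ lT] := lr.
by rewrite value_step // /value addrC lerD2r ler_wpM2r ?rprob_ge0 ?qcont_le.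
Qed.

Lemma value_step_eq l S : G l S -> (k <= l < Tm)%N ->
  qplus nu Tm l != 0 \/ p (S `&` regime1 l) = 0 ->
  reward l S + value l.+1 S = value l S.
Proof.
move=> GS lr; have /andP[_ lT] := lr.
by rewrite value_step // /value addrC => -[/(qplus_neq0 lT) ->|->]; rewrite ?mulr0.
Qed.

Lemma regime1_k : regime1 k = ik1.
Proof.
by rewrite regime1E; apply/seteqP; split => [w []//|w ik1w]; split => //; exact: n_k.
Qed.

Lemma qfunE w :
  qfun nu Tm k (ik w) = qplus nu Tm k * \1_ik1 w + qminus Tm k * \1_(~` ik1) w.
Proof.
rewrite /qfun !indicE; case: (ik_pm1 w) => ikw.
  by rewrite ikw eqxx mem_set ?memNset //= ?mulr1 ?mulr0 ?addr0.
have nik1 : ~ ik1 w by rewrite /ik1 /= ikw => /eqP; rewrite eqrN1_1.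
by rewrite ikw eqrN1_1 (memNset nik1) (mem_set (nik1 : (~` ik1) w)) mulr0 add0r mulr1.
Qed.

Lemma integrable_qfun : P.-integrable setT (EFin \o (fun w => qfun nu Tm k (ik w))).
Proof.
rewrite (_ : _ \o _ = fun w => (qplus nu Tm k * \1_ik1 w + qminus Tm k * \1_(~` ik1) w)%:E).
  exact/integrable_indic_comb/F_measurable/F_ik1.
by apply/funext => w /=; rewrite qfunE.
Qed.

Lemma integral_qfun D : measurable D ->
  (\int[P]_(w in D) (qfun nu Tm k (ik w))%:E = (value k D)%:E)%E.
Proof.
move=> mD; under eq_integral do rewrite qfunE.
rewrite integral_indic_comb //; last exact/F_measurable/F_ik1.
by rewrite /value regime1_k setIC setDE [~` _ `&` _]setIC.
Qed.

Definition alive (theta : Omega -> nat) A l := A `&` [set w | (l < theta w)%N].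

Section stopping_rule.
Variable theta : Omega -> nat.
Hypothesis theta_stop : stopping_time G k Tm theta.

Lemma G_alive A l : F k A -> (l <= Tm)%N -> G l (alive theta A l).
Proof.
move=> FA lT; apply: (sa_setI (saG l)); first exact: sub_gen_filtration.
exact: (stopping_time_gt saG G_mono theta_stop lT).
Qed.

Lemma measurable_alive A l : F k A -> measurable (alive theta A l).
Proof.
move=> FA; apply: measurableI; first exact: F_measurable.
exact: (measurable_stopping_time_gt saG G_mono G_measurable theta_stop).
Qed.

Lemma payoffE w : payoff i k Tm theta w = \sum_(k <= l < Tm)
  (\1_([set w | (l < theta w)%N] `\` regime1 l.+1) w
   - \1_([set w | (l < theta w)%N] `&` regime1 l.+1) w).
Proof.
rewrite /payoff big_add1 /=; apply: eq_bigr => l _; rewrite !indicE.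
have [lt|ge] := ltnP l (theta w); last first.
  by rewrite !memNset ?mulr0 ?subr0 // => -[]; rewrite /= ltnNge ge.
have [Rw|nRw] := pselect (regime1 l.+1 w).
  rewrite memNset ?mem_set //; last by case.
  by rewrite (Rw : i l.+1 w = 1) eqxx eq_sym eqrN1_1 /= mulr1.
rewrite mem_set ?memNset //; last by case.
have im1 : i l.+1 w = -1 by case: (regime_pm1 n ik_pm1 l.+1 w).
by rewrite im1 eqxx eqrN1_1 /= mulr1.
Qed.

Lemma integral_payoff A : F k A ->
  (\int[P]_(w in A) (payoff i k Tm theta w)%:E
   = (\sum_(k <= l < Tm) reward l (alive theta A l))%:E)%E.
Proof.
move=> FA; have mA := F_measurable FA.
have mT l := measurable_stopping_time_gt saG G_mono G_measurable theta_stop l.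
have mX l : measurable ([set w | (l < theta w)%N] `\` regime1 l.+1).
  exact: measurableD (mT l) (measurable_regime1 _).
have mY l : measurable ([set w | (l < theta w)%N] `&` regime1 l.+1).
  exact: measurableI (mT l) (measurable_regime1 _).
under eq_integral do rewrite payoffE -sumEFin.
rewrite integral_sum //; last first.
  move=> l; under eq_fun do rewrite EFinB.
  by apply: integrableB => //; exact: integrable_indic_on.
rewrite -sumEFin; apply: eq_bigr => l _.
rewrite integralB_EFin //; try exact: integrable_indic_on.
have mAl := measurable_alive l FA.
rewrite !integral_indic // /reward EFinB.
have -> : ([set w | (l < theta w)%N] `\` regime1 l.+1) `&` A
    = alive theta A l `\` regime1 l.+1 by rewrite /alive; apply/seteqP; split => w /=; tauto.
have -> : ([set w | (l < theta w)%N] `&` regime1 l.+1) `&` A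
    = alive theta A l `&` regime1 l.+1 by rewrite /alive; apply/seteqP; split => w /=; tauto.
congr (_ - _)%E; apply: rprobE.
- exact: measurableD mAl (measurable_regime1 _).
- exact: measurableI _ _ mAl (measurable_regime1 _).
Qed.

Lemma integral_payoff_le A : F k A ->
  (\int[P]_(w in A) (payoff i k Tm theta w)%:E <= (value k A)%:E)%E.
Proof.
move=> FA; rewrite integral_payoff // lee_fin.
pose V l := value l (alive theta A l).
have mA l := measurable_alive l FA.
apply: (@le_trans _ _ (\sum_(k <= l < Tm) (V l - V l.+1))).
  apply: ler_sum_nat => l /andP[kl lT]; rewrite lerBrDr.
  apply: le_trans (value_step_le (G_alive FA (ltnW lT)) _); last by rewrite kl.
  by rewrite lerD2l; apply: le_value => // w [Aw /ltnW].
rewrite (@telescope_sumr_eq _ k Tm (fun l => - V l)) //; last first.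
  by move=> l _; rewrite opprK addrC.
rewrite /V value_Tm oppr0 add0r opprK; apply: le_value => //; first exact: F_measurable.
by move=> w [].
Qed.

End stopping_rule.

Lemma exists_qplus_eq0 : exists l, (k <= l)%N && (qplus nu Tm l == 0).
Proof. by exists Tm; rewrite kTm qplus_Tm eqxx. Qed.

Definition call_level := ex_minn exists_qplus_eq0.

Lemma call_levelP : [/\ (k <= call_level <= Tm)%N, qplus nu Tm call_level = 0
  & forall l, (k <= l < call_level)%N -> qplus nu Tm l != 0].
Proof.
rewrite /call_level; case: ex_minnP => m /andP[km /eqP q0] m_min; split => //.
  by rewrite km m_min // kTm qplus_Tm eqxx.
move=> l /andP[kl lm]; apply/eqP => ql.
by have := m_min l; rewrite kl ql eqxx leqNgt lm => /(_ isT).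
Qed.

Definition theta_opt w := if i call_level w == 1 then call_level else Tm.

Lemma stopping_time_opt : stopping_time G k Tm theta_opt.
Proof.
have [/andP[kl lT] _ _] := call_levelP.
split => [w|l _].
  by rewrite /theta_opt; case: ifP => _; rewrite ?kl ?lT ?kTm ?leqnn.
have -> : [set w | theta_opt w = l] =
    (regime1 call_level `&` [set _ | call_level = l])
    `|` (~` regime1 call_level `&` [set _ | Tm = l]).
  apply/seteqP; split => w; rewrite /theta_opt /regime1 /=.
    by case: eqP => iw e; [left|right].
  by case=> -[iw e]; [rewrite iw eqxx|case: eqP].
have [ll|ll] := leqP call_level l; last first.
  rewrite (_ : _ `|` _ = set0); first exact: sa_set0.
  apply/seteqP; split => w // -[] [_ /= e]; first by move: ll; rewrite e ltnn.
  by move: (leq_trans lT (eq_leq e)); rewrite leqNgt ll.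
have GR : G l (regime1 call_level).
  by apply: (gen_filtration_preimage (B := [set 1])); [rewrite kl ll|exact: measurable_set1].
apply: (sa_setU (saG l)); apply: (sa_setI (saG l));
  by first [exact: GR|exact: (sa_cst (saG l))|exact: (sa_setC (saG l))].
Qed.

Lemma alive_opt_lt A l : (l < call_level)%N -> alive theta_opt A l = A.
Proof.
have [/andP[_ lT] _ _] := call_levelP => ll.
apply/seteqP; split => [w []//|w Aw]; split => //=; rewrite /theta_opt.
by case: ifP => // _; exact: leq_trans ll lT.
Qed.

Lemma alive_opt_ge A l : (call_level <= l < Tm)%N ->
  alive theta_opt A l = A `\` regime1 call_level.
Proof.
move=> /andP[ll lT]; apply/seteqP; split => w [Aw h]; split => //=.
  move: h; rewrite /= /theta_opt; case: ifPn => [_|/eqP ne _]; last exact: ne.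
  by rewrite ltnNge ll.
by rewrite /theta_opt ifN //; exact/eqP.
Qed.

Lemma value_call_level S : value call_level S = value call_level (S `\` regime1 call_level).
Proof.
have [_ q0 _] := call_levelP; rewrite /value q0 !mul0r !add0r.
by rewrite setDDl setUid.
Qed.

Lemma value_alive_opt A l : (l < Tm)%N ->
  value l.+1 (alive theta_opt A l.+1) = value l.+1 (alive theta_opt A l).
Proof.
move=> lT; have [lT'|] := ltnP l.+1 Tm; last first.
  by rewrite -ltnS => Tl; rewrite (_ : l.+1 = Tm) ?value_Tm //; apply/eqP; rewrite eqn_leq lT.
have [l1c|cl1] := ltnP l.+1 call_level.
  by rewrite !alive_opt_lt // ltnW.
rewrite alive_opt_ge ?cl1 //; move: cl1; rewrite leq_eqVlt => /orP[/eqP cl|cl].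
  by rewrite (alive_opt_lt _ (_ : l < call_level)%N) -cl -?value_call_level // cl.
by rewrite alive_opt_ge // -ltnS cl.
Qed.

Lemma rprob_alive_opt A l : F k A -> (call_level <= l < Tm)%N ->
  p (alive theta_opt A l `&` regime1 l) = 0.
Proof.
move=> FA lr; have [/andP[kc cT] _ _] := call_levelP; have /andP[cl lT] := lr.
rewrite alive_opt_ge //.
have mX : measurable ((A `\` regime1 call_level) `&` regime1 l).
  exact: measurableI (measurableD (F_measurable FA) (measurable_regime1 _)) (measurable_regime1 _).
rewrite /rprob -(measure_setI_monotone (F_sub k) n_measurable nu_ge0 increments_indep mX).
rewrite -setIA (regime1_monotone (introT andP (conj (leq_trans kc cl) (ltnW lT)))).
rewrite (_ : _ `&` _ = set0) ?measure0 //; apply/seteqP; split => w // [[_ nRc] zw].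
by apply/nRc/(zero_path_regime1 cT (zero_path_le cl zw)); rewrite kc leqnn.
Qed.

Lemma integral_payoff_opt A : F k A ->
  (\int[P]_(w in A) (payoff i k Tm theta_opt w)%:E = (value k A)%:E)%E.
Proof.
move=> FA; have [/andP[kc cT] _ q_neq0] := call_levelP.
rewrite (integral_payoff stopping_time_opt FA); congr EFin.
pose V l := value l (alive theta_opt A l).
have Vk : V k = value k A.
  have [kc'|ck] := ltnP k call_level; first by rewrite /V alive_opt_lt.
  have ec : call_level = k by apply/eqP; rewrite eqn_leq ck kc.
  have [kT|Tk] := ltnP k Tm; last first.
    by rewrite /V (_ : k = Tm) ?value_Tm //; apply/eqP; rewrite eqn_leq kTm.
  rewrite /V alive_opt_ge; last by rewrite ec leqnn kT.
  by rewrite -ec -value_call_level.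
rewrite -Vk (@telescope_sumr_eq _ k Tm (fun l => - V l)) //.
  by rewrite /V value_Tm oppr0 add0r opprK.
move=> l /andP[kl lT]; rewrite opprK /V value_alive_opt //.
rewrite -(value_step_eq (G_alive stopping_time_opt FA (ltnW lT))) ?kl //; first ring.
have [lc|cl] := ltnP l call_level; first by left; apply: q_neq0; rewrite kl.
by right; apply: rprob_alive_opt; rewrite ?cl.
Qed.

Lemma measurable_wrt_qfun : measurable_wrt (F k) (fun w => qfun nu Tm k (ik w)).
Proof.
move=> B _; apply: (sa_preimage_two_valued (E := ik1) (a := qplus nu Tm k) (b := qminus Tm k)).
- exact: saF.
- exact: F_ik1.
- by move=> w ik1w; rewrite /qfun ik1w eqxx.
- by move=> w nw; rewrite /qfun ifN //; exact/eqP.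
Qed.

Lemma F_qfun_lt Y : measurable_wrt (F k) Y ->
  F k [set w | qfun nu Tm k (ik w) < Y w].
Proof.
move=> mY; have Ygt a : F k [set w | a < Y w].
  have := mY _ (measurable_itv `]a, +oo[); congr (F k _).
  by apply/seteqP; split => w /=; rewrite in_itv /= andbT.
rewrite (_ : [set w | _] = (ik1 `&` [set w | qplus nu Tm k < Y w])
    `|` (~` ik1 `&` [set w | qminus Tm k < Y w])).
  by apply: sa_setU => //; apply: sa_setI => //; [exact: F_ik1|exact: sa_setC F_ik1].
apply/seteqP; split => w /=; rewrite /qfun.
  by case: eqP => ik1w lt; [left|right].
by case=> -[ik1w lt]; [rewrite ik1w eqxx|rewrite ifN //; exact/eqP].
Qed.

Lemma cond_exp_payoff_le_qfun theta Y : stopping_time G k Tm theta ->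
  is_cond_exp P (F k) (payoff i k Tm theta) Y ->
  {ae P, forall w, Y w <= qfun nu Tm k (ik w)}.
Proof.
move=> theta_stop [mY [iY YA]].
apply: ae_le_of_integral_le => //.
- exact: measurable_wrt_measurable_fun F_measurable mY.
- exact: measurable_wrt_measurable_fun F_measurable measurable_wrt_qfun.
- exact: integrable_qfun.
have FD := F_qfun_lt mY.
rewrite YA // integral_qfun; last exact: F_measurable.
exact: (integral_payoff_le theta_stop FD).
Qed.

Lemma cond_exp_payoff_opt :
  is_cond_exp P (F k) (payoff i k Tm theta_opt) (fun w => qfun nu Tm k (ik w)).
Proof.
split; first exact: measurable_wrt_qfun.
split; first exact: integrable_qfun.
by move=> A FA; rewrite integral_qfun ?integral_payoff_opt //; exact: F_measurable.
Qed.

End callable_range_accrual.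

Theorem lemma5p4 (R : realType) (d : measure_display) (Omega : measurableType d)
  (P : probability Omega R) (F : nat -> set (set Omega)) (k Tm : nat)
  (nu : nat -> R) (n : nat -> Omega -> nat) (ik : Omega -> R) :
  (* filtration *)
  (forall j, sub_sigma (F j)) ->
  (forall j j', (j <= j')%N -> F j `<=` F j') ->
  (k <= Tm)%N ->
  (forall l, (k <= l < Tm)%N -> 0 <= nu l) ->
  (* n^k: n^k_k = 0, measurable, independent Poisson increments indep. of F_k *)
  (forall l, measurable_fun setT (n l)) ->
  (forall w, n k w = 0%N) ->
  (forall (A : set Omega) (m : nat -> nat), F k A ->
     P (A `&` [set w | forall l, (k <= l < Tm)%N -> n l.+1 w = (n l w + m l)%N])
     = (P A * (\prod_(k <= l < Tm) pois (nu l) (m l))%:E)%E) ->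
  (* i^k_k in {-1,1}, F_k-measurable *)
  (forall w, ik w = 1 \/ ik w = -1) ->
  measurable_wrt (F k) ik ->
  let i := regime ik n in
  let G := gen_filtration (F k) i k in
  let Q := fun w => qfun nu Tm k (ik w) in
  (* Q = ess sup over stopping times theta of E_k[payoff theta] *)
  measurable_wrt (F k) Q /\
  (forall theta Y, stopping_time G k Tm theta ->
     is_cond_exp P (F k) (payoff i k Tm theta) Y ->
     {ae P, forall w, Y w <= Q w}) /\
  (forall Z : Omega -> R, measurable_wrt (F k) Z ->
     (forall theta Y, stopping_time G k Tm theta ->
        is_cond_exp P (F k) (payoff i k Tm theta) Y ->
        {ae P, forall w, Y w <= Z w}) ->
     {ae P, forall w, Q w <= Z w}).
Proof.
move=> F_sub _ kTm nu_ge0 n_meas n_k indep ik_pm1 ik_meas i G Q.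
split; first exact: measurable_wrt_qfun.
split=> [theta Y|Z _ Z_ub]; first exact: cond_exp_payoff_le_qfun.
apply: Z_ub; [exact: stopping_time_opt|exact: cond_exp_payoff_opt].
Qed.
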